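(* Let $p$ be an odd prime and let $P$ be the Paley matrix of order $p$. Then the $p^2\times p^2$ matrix \[H=P\otimes P+J\otimes I+\omega\, I\otimes J\] is a $BH(p^2,6)$ matrix, i.e. a complex Hadamard matrix of order $p^2$ all of whose entries are sixth roots of unity.
   Context: $\omega=e^{2\pi i/3}$. $I$ and $J$ denote the $p\times p$ identity and all-ones matrices, and $\otimes$ is the Kronecker product. The Paley matrix of order $p$ is the circulant matrix $P$ with $P_{i,j}=\chi(j-i)$ for $i,j\in\mathbb{Z}_p$, where $\chi(0)=0$, $\chi(k)=1$ if $k$ is a nonzero quadratic residue mod $p$ and $\chi(k)=-1$ otherwise. A complex Hadamard matrix of order $n$ is an $n\times n$ matrix with unimodular entries satisfying $HH^\ast=nI_n$; $BH(n,q)$ denotes such a matrix whose entries are $q$-th roots of unity. *)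

(* complex numbers are the algebraic numbers algC. *)
From HB Require Import structures.
From mathcomp Require Import all_boot all_order all_algebra algC.
Set Implicit Arguments. Unset Strict Implicit. Unset Printing Implicit Defensive.
Import Order.TTheory GRing.Theory Num.Theory.
Local Open Scope ring_scope.

(* omega = e^{2 pi i/3} = (-1 + i sqrt 3)/2 *)
Definition omega : algC := (-1 + 'i * sqrtC 3%:R) / 2%:R.

Definition chi (p : nat) (k : nat) : algC :=
  if (k %% p == 0)%N then 0
  else if [exists x : 'I_p, ((x * x) %% p == k %% p)%N] then 1 else -1.

Definition paley (p : nat) : 'M[algC]_p :=
  \matrix_(i < p, j < p) chi p (j + p - i)%N.

(* Kronecker product, rows/columns indexed by pairs in lexicographic order
   (the same indexing as mxvec_index). *)
Definition kron_idx (m n : nat) (k : 'I_(m * n)) : 'I_m * 'I_n :=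
  enum_val (cast_ord (esym (mxvec_cast m n)) k).

Definition kron (m1 n1 m2 n2 : nat) (A : 'M[algC]_(m1, n1)) (B : 'M[algC]_(m2, n2))
  : 'M[algC]_(m1 * m2, n1 * n2) :=
  \matrix_(k, l) (A (kron_idx k).1 (kron_idx l).1 * B (kron_idx k).2 (kron_idx l).2).

Definition adjmx (m n : nat) (A : 'M[algC]_(m, n)) : 'M[algC]_(n, m) :=
  map_mx (fun x => x^*) A^T.

Definition complex_hadamard (n : nat) (H : 'M[algC]_n) : Prop :=
  (forall i j, `|H i j| = 1) /\ H *m adjmx H = n%:R%:M.

Definition butson_hadamard (n q : nat) (H : 'M[algC]_n) : Prop :=
  complex_hadamard H /\ (forall i j, (H i j) ^+ q = 1).

(* The proof separates what is special about P from the construction itself.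
   - For ANY n x n matrix P with zero diagonal and off-diagonal entries +-1,
     every entry of H is one of 1 + omega, omega, 1, +-1, hence a sixth root of
     unity (and so unimodular).
   - For ANY P with P J = 0 and P P^* = nI - J, expanding H H^* with the mixed
     product rule of the Kronecker product kills every cross term containing
     P J or J P^*, and the remaining terms add up to n^2 I because
     omega + omega^* = -1 and omega omega^* = 1.
   - The Paley matrix has both properties: its entries are values of the
     quadratic character of F_p, whose values sum to 0 and whose
     autocorrelation at every nonzero shift is -1 (counted in any finite field
     of odd characteristic via the number of square roots of each element). *)
From HB Require Import structures.
From mathcomp Require Import all_boot all_order all_algebra algC.
From mathcomp Require Import ring.
Import Order.TTheory GRing.Theory Num.Theory.
Local Open Scope ring_scope.

Lemma sum_indicator {T : finType} (c : T) : \sum_(y : T) ((y == c)%:R : algC) = 1.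
Proof. by rewrite (bigD1 c) //= eqxx big1 ?addr0 // => y /negbTE ->. Qed.

Lemma norm_unity (R : numDomainType) (n : nat) (x : R) :
  (0 < n)%N -> x ^+ n = 1 -> `|x| = 1.
Proof.
by move=> n_gt0 xn1; apply/eqP; rewrite -(pexpr_eq1 n_gt0 (normr_ge0 x)) -normrX xn1 normr1.
Qed.

Lemma sqrt3_conj : (sqrtC 3%:R : algC)^* = sqrtC 3%:R.
Proof. by apply/conj_Creal/sqrtC_real; rewrite ler0n. Qed.

Lemma omega_conjE : omega^* = (-1 - 'i * sqrtC 3%:R) / 2%:R.
Proof.
by rewrite /omega fmorph_div rmorphD rmorphN rmorph1 rmorphM /= conjCi
  sqrt3_conj rmorph_nat mulNr.
Qed.

Lemma omega_mul_conj : omega * omega^* = 1.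
Proof.
rewrite omega_conjE /omega.
have -> : (-1 + 'i * sqrtC 3%:R) / 2%:R * ((-1 - 'i * sqrtC 3%:R) / 2%:R)
          = (1 - 'i ^+ 2 * sqrtC (3%:R : algC) ^+ 2) / 4%:R by field.
by rewrite sqrCi sqrtCK; field.
Qed.

Lemma omega_add_conj : omega + omega^* = -1.
Proof. by rewrite omega_conjE /omega; field. Qed.

Lemma omega_root : omega ^+ 2 + omega + 1 = 0.
Proof.
have -> : omega ^+ 2 + omega + 1
          = (3%:R + 'i ^+ 2 * sqrtC (3%:R : algC) ^+ 2) / 4%:R by rewrite /omega; field.
by rewrite sqrCi sqrtCK; field.
Qed.

Lemma omega_cube : omega ^+ 3 = 1.
Proof.
apply/eqP; rewrite -subr_eq0.
have -> : omega ^+ 3 - 1 = (omega - 1) * (omega ^+ 2 + omega + 1) by ring.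
by rewrite omega_root mulr0.
Qed.

Lemma one_add_omega : 1 + omega = - omega ^+ 2.
Proof. by rewrite -[RHS]addr0 -omega_root; ring. Qed.

Lemma omega_sixth : omega ^+ 6 = 1.
Proof. by rewrite (exprM _ 3 2) omega_cube expr1n. Qed.

Lemma one_add_omega_sixth : (1 + omega) ^+ 6 = 1.
Proof.
by rewrite one_add_omega exprNn -exprM (exprM _ 3 4) omega_cube expr1n -signr_odd mulr1.
Qed.

Lemma adjmxD m n (A B : 'M[algC]_(m, n)) : adjmx (A + B) = adjmx A + adjmx B.
Proof. by apply/matrixP => i j; rewrite !mxE rmorphD. Qed.

Lemma adjmxZ m n a (A : 'M[algC]_(m, n)) : adjmx (a *: A) = a^* *: adjmx A.
Proof. by apply/matrixP => i j; rewrite !mxE rmorphM. Qed.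

Lemma adjmxM m n r (A : 'M[algC]_(m, n)) (B : 'M[algC]_(n, r)) :
  adjmx (A *m B) = adjmx B *m adjmx A.
Proof. by rewrite /adjmx trmx_mul map_mxM. Qed.

Lemma adjmx0 m n : adjmx (0 : 'M[algC]_(m, n)) = 0.
Proof. by apply/matrixP => i j; rewrite !mxE rmorph0. Qed.

Lemma adjmx_const1 m n : adjmx (const_mx 1 : 'M[algC]_(m, n)) = const_mx 1.
Proof. by apply/matrixP => i j; rewrite !mxE rmorph1. Qed.

Lemma adjmx1 n : adjmx (1%:M : 'M[algC]_n) = 1%:M.
Proof. by apply/matrixP => i j; rewrite !mxE eq_sym rmorphMn rmorph1. Qed.

Lemma kron_idx_bij m n : bijective (@kron_idx m n).
Proof.
exists (fun x => cast_ord (mxvec_cast m n) (enum_rank x)).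
  by move=> k; rewrite /kron_idx enum_valK cast_ordKV.
by move=> x; rewrite /kron_idx cast_ordK enum_rankK.
Qed.

Lemma kron_idx_eq m n (k l : 'I_(m * n)) :
  (k == l) = ((kron_idx k).1 == (kron_idx l).1) && ((kron_idx k).2 == (kron_idx l).2).
Proof.
by rewrite -xpair_eqE -!surjective_pairing (inj_eq (bij_inj (kron_idx_bij m n))).
Qed.

Lemma sum_kron_idx m n (F : 'I_m -> 'I_n -> algC) :
  \sum_(k : 'I_(m * n)) F (kron_idx k).1 (kron_idx k).2 = \sum_i \sum_j F i j.
Proof.
rewrite pair_big /= (reindex (@kron_idx m n)) //.
exact/onW_bij/kron_idx_bij.
Qed.

Lemma kron_mul m1 n1 r1 m2 n2 r2 (A : 'M[algC]_(m1, n1)) (B : 'M[algC]_(m2, n2))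
  (C : 'M[algC]_(n1, r1)) (D : 'M[algC]_(n2, r2)) :
  kron A B *m kron C D = kron (A *m C) (B *m D).
Proof.
apply/matrixP => k l; rewrite !mxE.
under eq_bigr => e _ do rewrite !mxE.
rewrite (@sum_kron_idx _ _ (fun i j => A (kron_idx k).1 i * B (kron_idx k).2 j
                                  * (C i (kron_idx l).1 * D j (kron_idx l).2))).
rewrite big_distrlr /=; apply: eq_bigr => i _; apply: eq_bigr => j _; ring.
Qed.

Lemma kron0l m1 n1 m2 n2 (B : 'M[algC]_(m2, n2)) : kron (0 : 'M[algC]_(m1, n1)) B = 0.
Proof. by apply/matrixP => k l; rewrite !mxE mul0r. Qed.

Lemma kron0r m1 n1 m2 n2 (A : 'M[algC]_(m1, n1)) : kron A (0 : 'M[algC]_(m2, n2)) = 0.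
Proof. by apply/matrixP => k l; rewrite !mxE mulr0. Qed.

Lemma adjmx_kron m1 n1 m2 n2 (A : 'M[algC]_(m1, n1)) (B : 'M[algC]_(m2, n2)) :
  adjmx (kron A B) = kron (adjmx A) (adjmx B).
Proof. by apply/matrixP => k l; rewrite !mxE rmorphM. Qed.

Section Construction.
Context {n : nat}.
Local Notation J := (const_mx 1 : 'M[algC]_n).
Local Notation I := (1%:M : 'M[algC]_n).

Definition bh6 (P : 'M[algC]_n) : 'M[algC]_(n * n) :=
  kron P P + kron J I + omega *: kron I J.

Lemma J_mul_J : J *m J = n%:R *: J.
Proof.
apply/matrixP => i j; rewrite !mxE.
under eq_bigr => k _ do rewrite !mxE mul1r.
by rewrite sumr_const card_ord mulr1.
Qed.

(* If P has zero row sums and P P^* = nI - J, then H H^* = n^2 I: all cross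
   terms vanish except those cancelling via omega + omega^* = -1 and
   omega omega^* = 1. *)
Lemma bh6_gram (P : 'M[algC]_n) :
  P *m J = 0 -> P *m adjmx P = n%:R%:M - J ->
  bh6 P *m adjmx (bh6 P) = (n * n)%:R%:M.
Proof.
move=> PJ0 PP.
have JP0 : J *m adjmx P = 0 by rewrite -adjmx_const1 -adjmxM PJ0 adjmx0.
rewrite /bh6 !adjmxD adjmxZ !adjmx_kron adjmx_const1 adjmx1.
rewrite !mulmxDl !mulmxDr -!scalemxAl -!scalemxAr !kron_mul.
rewrite !mulmx1 !mul1mx PJ0 JP0 !kron0l !kron0r !scaler0 !addr0 !add0r PP J_mul_J.
apply/matrixP => k l; rewrite !mxE kron_idx_eq.
set x := (kron_idx k).1 == (kron_idx l).1; set y := (kron_idx k).2 == (kron_idx l).2.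
rewrite -[RHS]mulr_natr -mulnb !natrM -[n%:R *+ x]mulr_natr -[n%:R *+ y]mulr_natr.
transitivity (n%:R * n%:R * (x%:R * y%:R)
              + (omega + omega^* + 1) + (omega * omega^* - 1) * (x%:R * n%:R) : algC).
  ring.
by rewrite omega_add_conj omega_mul_conj subrr addNr mul0r !addr0.
Qed.

(* If P has zero diagonal and entries +-1 off the diagonal, each entry of
   bh6 P is one of 1 + omega, omega, 1 or +-1, all sixth roots of unity. *)
Lemma bh6_sixth_root (P : 'M[algC]_n) :
  (forall i, P i i = 0) -> (forall i j, i != j -> P i j = 1 \/ P i j = -1) ->
  forall k l, bh6 P k l ^+ 6 = 1.
Proof.
move=> Pdiag Poff k l; rewrite /bh6 !mxE !mulr1 !mul1r.
set a := (kron_idx k).1; set c := (kron_idx l).1.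
set b := (kron_idx k).2; set d := (kron_idx l).2.
have sign6 : (-1 : algC) ^+ 6 = 1 by rewrite -signr_odd.
case: (eqVneq a c) => [<-|ac].
  rewrite Pdiag mul0r add0r mulr1.
  case: (eqVneq b d) => _; first exact: one_add_omega_sixth.
  by rewrite add0r omega_sixth.
rewrite mulr0 addr0; case: (eqVneq b d) => [<-|bd].
  by rewrite Pdiag mulr0 add0r expr1n.
rewrite addr0.
by case: (Poff _ _ ac) => ->; case: (Poff _ _ bd) => ->;
  rewrite ?mulr1 ?mulrN1 ?opprK ?expr1n ?sign6.
Qed.

End Construction.

Section QuadraticCharacter.
Context {F : finFieldType}.
Hypothesis two_neq0 : (2%:R : F) != 0.

(* nsqrt x is the number of square roots of x in F, as a complex number, and
   legendre x = nsqrt x - 1 is the quadratic character of F. *)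
Definition nsqrt (x : F) : algC := \sum_(y : F) (y * y == x)%:R.
Definition legendre (x : F) : algC := nsqrt x - 1.

Lemma sum_shift (f : F -> algC) (a : F) : \sum_x f (x + a) = \sum_x f x.
Proof. by rewrite [RHS](reindex_inj (addIr a)). Qed.

(* Every y is the square root of exactly one x, so the counts add up to #|F|. *)
Lemma sum_nsqrt : \sum_x nsqrt x = #|F|%:R.
Proof.
rewrite exchange_big /= (eq_bigr (fun _ => 1)) ?sumr_const // => y _.
by under eq_bigr => x _ do rewrite eq_sym; rewrite sum_indicator.
Qed.

(* The values of nsqrt: 0 has one square root, a nonzero square has two (y and
   -y differ since 2 != 0), a non-square has none. *)
Lemma nsqrt0 : nsqrt 0 = 1.
Proof.
by rewrite /nsqrt; under eq_bigr => y _ do rewrite mulf_eq0 orbb; rewrite sum_indicator.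
Qed.

Lemma nsqrt_square (y : F) : y != 0 -> nsqrt (y * y) = 2%:R.
Proof.
move=> y_neq0; have Ny_neq_y : - y != y.
  by rewrite -subr_eq0 -opprD -mulr2n -mulr_natl oppr_eq0 mulf_neq0.
rewrite /nsqrt (bigD1 y) //= eqxx (bigD1 (- y)) //= mulrNN eqxx big1 ?addr0 //.
by move=> z /andP[zy zNy]; rewrite -!expr2 eqf_sqr (negbTE zy) (negbTE zNy).
Qed.

Lemma nsqrt_nonsquare (x : F) : (forall y, y * y != x) -> nsqrt x = 0.
Proof. by move=> nsq; rewrite /nsqrt big1 // => y _; rewrite (negbTE (nsq y)). Qed.

(* Counting the pairs (y, z) with z^2 = y^2 + t by writing z = y + u: for u != 0
   the equation u (2y + u) = t has exactly one solution y. *)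
Lemma nsqrt_corr_count (t : F) :
  \sum_x nsqrt x * nsqrt (x + t)
  = \sum_(u : F) \sum_(y : F) ((u * (2%:R * y + u) == t)%:R : algC).
Proof.
transitivity (\sum_(y : F) \sum_(z : F) ((z * z == y * y + t)%:R : algC)).
  under eq_bigr => x _ do rewrite mulr_suml.
  rewrite exchange_big /=; apply: eq_bigr => y _.
  under eq_bigr => x _ do rewrite mulr_sumr.
  rewrite exchange_big /=; apply: eq_bigr => z _.
  rewrite (bigD1 (y * y)) //= eqxx mul1r big1 ?addr0 // => x /negbTE.
  by rewrite eq_sym => ->; rewrite mul0r.
rewrite [RHS]exchange_big; apply: eq_bigr => y _ /=.
rewrite (reindex_inj (addrI y)) /=; apply: eq_bigr => u _.
have -> : (y + u) * (y + u) = y * y + u * (2%:R * y + u) by ring.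
by rewrite (inj_eq (addrI _)).
Qed.

Lemma nsqrt_corr (t : F) :
  \sum_x nsqrt x * nsqrt (x + t) = (#|F|.-1)%:R + (t == 0)%:R * #|F|%:R.
Proof.
have one_solution (u : F) : u != 0 -> \sum_(y : F) ((u * (2%:R * y + u) == t)%:R : algC) = 1.
  move=> u_neq0; rewrite -[RHS](sum_indicator ((t / u - u) / 2%:R : F)); apply: eq_bigr => y _.
  suff -> : (u * (2%:R * y + u) == t) = (y == (t / u - u) / 2%:R) by [].
  by apply/eqP/eqP => [<-|->]; field; rewrite two_neq0 u_neq0.
rewrite nsqrt_corr_count (bigD1 0) //= (eq_bigr (fun=> 1) one_solution).
under eq_bigr => y _ do rewrite mul0r.
by rewrite !sumr_const (cardC1 (0 : F)) addrC eq_sym mulr_natr.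
Qed.

Lemma legendre0 : legendre 0 = 0.
Proof. by rewrite /legendre nsqrt0 subrr. Qed.

Lemma legendre_square (y : F) : y != 0 -> legendre (y * y) = 1.
Proof. by move=> y_neq0; rewrite /legendre nsqrt_square // (natrD _ 1 1) addrK. Qed.

Lemma legendre_nonsquare (x : F) : (forall y, y * y != x) -> legendre x = -1.
Proof. by move=> nsq; rewrite /legendre nsqrt_nonsquare ?sub0r. Qed.

Lemma legendre_sum : \sum_x legendre x = 0.
Proof. by rewrite sumrB sum_nsqrt sumr_const subrr. Qed.

Lemma legendre_corr (t : F) :
  \sum_x legendre x * legendre (x + t) = (t == 0)%:R * #|F|%:R - 1.
Proof.
transitivity (\sum_x nsqrt x * nsqrt (x + t) - \sum_x nsqrt x - \sum_x nsqrt (x + t)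
              + \sum_(x : F) 1).
  by rewrite -!sumrB -big_split /=; apply: eq_bigr => x _; rewrite /legendre; ring.
have F_gt0 : (0 < #|F|)%N by apply/card_gt0P; exists 0.
have cardS : (#|F|%:R : algC) = (#|F|.-1)%:R + 1.
  by rewrite -[in LHS](prednK F_gt0) -addn1 natrD.
rewrite nsqrt_corr (sum_shift nsqrt) sum_nsqrt sumr_const cardS; ring.
Qed.
End QuadraticCharacter.


Section Paley.
Context {p : nat}.
Hypothesis p_prime : prime p.
Hypothesis p_odd : odd p.
Local Notation J := (const_mx 1 : 'M[algC]_p).

Lemma Fp_two_neq0 : (2%:R : 'F_p) != 0.
Proof.
rewrite -(dvdn_pcharf (pchar_Fp p_prime)); apply/negP => /dvdn_leq p_le2.
have := p_le2 isT; have := prime_gt1 p_prime.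
by case: p p_odd => [|[|[|]]].
Qed.

Lemma natFp_eq (a b : nat) : ((a%:R : 'F_p) == b%:R) = (a %% p == b %% p)%N.
Proof.
apply/eqP/eqP => [eq_ab|eq_ab]; first by rewrite -!(val_Fp_nat p_prime) eq_ab.
by apply: val_inj; rewrite /= !(val_Fp_nat p_prime).
Qed.

Lemma natFp_eq0 (a : nat) : (a %% p == 0)%N = (a%:R == 0 :> 'F_p).
Proof. by rewrite -(dvdn_pcharf (pchar_Fp p_prime)). Qed.

Lemma natFp_ord_eq (i j : 'I_p) : ((i : nat)%:R == (j : nat)%:R :> 'F_p) = (i == j).
Proof. by rewrite natFp_eq !modn_small. Qed.

Lemma chi_legendre (m : nat) : chi p m = legendre (m%:R : 'F_p).
Proof.
rewrite /chi natFp_eq0; case: eqP => [->|/eqP m_neq0]; first by rewrite legendre0.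
case: ifP => [/existsP[x /eqP sq_x] | no_sq].
  have x_sq : (x%:R : 'F_p) * x%:R = m%:R by apply/eqP; rewrite -natrM natFp_eq sq_x.
  rewrite -x_sq legendre_square ?Fp_two_neq0 //.
  by apply: contraNneq m_neq0 => x0; rewrite -x_sq x0 mul0r.
rewrite legendre_nonsquare // => y; apply: contraFN no_sq => /eqP sq_y.
have y_lt : (val y < p)%N by rewrite -[X in (_ < X)%N](Fp_cast p_prime) ltn_ord.
apply/existsP; exists (Ordinal y_lt).
by rewrite -(natFp_eq (val y * val y) m) natrM natr_Zp sq_y.
Qed.

Lemma natFp_shift (i k : 'I_p) : ((k + p - i)%N%:R : 'F_p) = k%:R - i%:R.
Proof.
have i_le : (i <= p)%N := ltnW (ltn_ord i).
by rewrite -addnBA // natrD natrB // (pchar_Fp_0 p_prime) sub0r.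
Qed.

Lemma paleyE (i k : 'I_p) : paley p i k = legendre ((k : nat)%:R - (i : nat)%:R : 'F_p).
Proof. by rewrite mxE chi_legendre natFp_shift. Qed.

Lemma sum_ord_Fp (f : 'F_p -> algC) : \sum_(k < p) f k%:R = \sum_x f x.
Proof.
rewrite [RHS](eq_bigr (fun x : 'F_p => f (val x)%:R)) => [|x _]; last by rewrite natr_Zp.
rewrite -(big_mkord xpredT (fun k => f k%:R)).
by rewrite -[in RHS](big_mkord xpredT (fun k => f k%:R)) (Fp_cast p_prime).
Qed.

Lemma paley_row_sum (i : 'I_p) : \sum_k paley p i k = 0.
Proof.
under eq_bigr => k _ do rewrite paleyE.
by rewrite (sum_ord_Fp (fun x => legendre (x - i%:R))) (sum_shift legendre) legendre_sum.
Qed.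

Lemma paley_row_corr (i j : 'I_p) :
  \sum_k paley p i k * paley p j k = (i == j)%:R * p%:R - 1.
Proof.
under eq_bigr => k _ do rewrite !paleyE.
rewrite (sum_ord_Fp (fun x => legendre (x - i%:R) * legendre (x - j%:R))).
rewrite -(sum_shift _ i%:R).
under eq_bigr => x _ do rewrite addrK -addrA.
by rewrite legendre_corr ?Fp_two_neq0 // subr_eq0 natFp_ord_eq (card_Fp p_prime).
Qed.

Lemma paley_diag (i : 'I_p) : paley p i i = 0.
Proof. by rewrite paleyE subrr legendre0. Qed.

Lemma paley_offdiag (i j : 'I_p) : i != j -> paley p i j = 1 \/ paley p i j = -1.
Proof.
move=> ij; rewrite mxE /chi.
have -> : ((j + p - i) %% p == 0)%N = false.
  by rewrite natFp_eq0 natFp_shift subr_eq0 natFp_ord_eq eq_sym (negbTE ij).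
by case: ifP; [left | right].
Qed.

Lemma paley_adj : adjmx (paley p) = (paley p)^T.
Proof.
rewrite /adjmx -map_trmx; congr trmx; apply/matrixP => i j; rewrite mxE.
have [<-|ij] := eqVneq i j; first by rewrite paley_diag rmorph0.
by case: (paley_offdiag _ _ ij) => ->; rewrite ?rmorphN rmorph1.
Qed.

Lemma paley_mulJ : paley p *m J = 0.
Proof.
apply/matrixP => i j; rewrite mxE [RHS]mxE -[RHS](paley_row_sum i).
by apply: eq_bigr => k _; rewrite [const_mx 1 _ _]mxE mulr1.
Qed.

Lemma paley_gram : paley p *m adjmx (paley p) = p%:R%:M - J.
Proof.
apply/matrixP => i j; rewrite paley_adj mxE.
under eq_bigr => k _ do rewrite [_^T k j]mxE.
by rewrite paley_row_corr !mxE mulr_natl.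
Qed.

End Paley.

Theorem theorem1 (p : nat) (hp : prime p) (hodd : odd p) :
  butson_hadamard 6
    (kron (paley p) (paley p)
     + kron (const_mx 1 : 'M[algC]_p) (1%:M : 'M[algC]_p)
     + omega *: kron (1%:M : 'M[algC]_p) (const_mx 1 : 'M[algC]_p)).
Proof.
have sixth_root k l : bh6 (paley p) k l ^+ 6 = 1.
  apply: bh6_sixth_root => [i | i j]; [exact: paley_diag | exact: paley_offdiag].
split; [split|].
- by move=> k l; exact: norm_unity (sixth_root k l).
- exact: bh6_gram _ (paley_mulJ hp hodd) (paley_gram hp hodd).
- exact: sixth_root.
Qed.
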